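(* There are absolute constants $C,c>0$ such that the following holds. Given a graph $G=(V,E)$ with $|V|=n$, maximum degree $\Delta$ and distinct IDs, and a fixed parameter $1\le p\le\Delta$, there is a distributed algorithm in the LOCAL model running in $O(\log^* n)$ rounds that computes for every vertex $v$ a set $S_v\subseteq\{1,\dots,m\}$ with $m\le C(\Delta/p)^2$ and $|S_v|\ge c\Delta/p$, such that every choice of one color from each $S_v$ is a $p$-defective $m$-coloring of $G$. Thus the solution domain has size $\Omega(\Delta/p)$ and the contingency factor is $O(\Delta/p)$.
   Context: A map $\varphi:V\to\{1,\dots,m\}$ is a $p$-defective $m$-coloring if every vertex has at most $p$ neighbors of its own color. LOCAL model: synchronous rounds, unbounded messages along edges; complexity measured in rounds. Solution domain size $=\min_v|S_v|$; contingency factor $=m/\min_v|S_v|$. *)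

From mathcomp Require Import all_boot all_order.
Set Implicit Arguments. Unset Strict Implicit. Unset Printing Implicit Defensive.

Definition simple_graph (T : finType) (e : rel T) : Prop :=
  symmetric e /\ irreflexive e.

Definition deg (T : finType) (e : rel T) (v : T) : nat := #|[set u | e v u]|.

Definition maxdeg (T : finType) (e : rel T) : nat := \max_(v : T) deg e v.

Fixpoint ball (T : finType) (e : rel T) (k : nat) (v : T) : {set T} :=
  match k with
  | 0 => [set v]
  | k'.+1 => ball e k' v :|: [set y | [exists z in ball e k' v, e z y]]
  end.

Definition inner (T : finType) (e : rel T) (r : nat) (v : T) : {set T} :=
  if r is r'.+1 then ball e r' v else set0.

(* The information available at v after r rounds of LOCAL (full-information
   flooding): its own ID and all edges (as ID pairs) incident to vertices at
   distance < r from v. *)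
Definition view (T : finType) (e : rel T) (id : T -> nat) (r : nat) (v : T)
  : nat * (nat -> nat -> bool) :=
  (id v, fun a b => [exists x, exists y,
      [&& x \in inner e r v, e x y, id x == a & id y == b]]).

(* A deterministic LOCAL algorithm: given the global parameters n, Delta, p,
   the output of a vertex is a function of its radius-r view. *)
Definition local_algo := nat -> nat -> nat -> nat * (nat -> nat -> bool) -> seq nat.

Definition defective (T : finType) (e : rel T) (p : nat) (phi : T -> nat) : Prop :=
  forall v, #|[set u | e v u & phi u == phi v]| <= p.

Fixpoint logstar_aux (fuel n : nat) : nat :=
  match fuel with
  | 0 => 0
  | f.+1 => if n <= 1 then 0 else (logstar_aux f (trunc_log 2 n)).+1
  end.
Definition logstar (n : nat) : nat := logstar_aux n n.

(* Start from the IDs, read as [L]-bit colours.  A round of Linial-style colour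
   reduction views a colour as a polynomial of degree [t ~ L / log K] over a field
   with [K ~ (Delta / p) L^2] elements and replaces it by the pair (i, value at i)
   for an evaluation point [i] shared with few neighbours: distinct polynomials
   agree in at most [t] points, so by averaging some point adds at most
   [Delta t / K <= (p + 1) / 8L] monochromatic neighbours.  The new colours have
   [O(log L + log (Delta / p))] bits, so after [O(log* n)] rounds
   [L = O(log (Delta / p))] while the total defect stays below [(p + 1) / 8].
   Finally, over a field with [K = Theta(Delta / p)] elements, every vertex lists
   all pairs (i, value at i) shared with at most [p] neighbours: averaging again
   shows that at least [3K / 8] points qualify, and any choice of one pair per
   vertex is [p]-defective, since neighbours choosing the same pair agree at [i]. *)

From mathcomp Require Import all_boot all_order all_algebra finfield zify.
Set Implicit Arguments. Unset Strict Implicit. Unset Printing Implicit Defensive.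

Import GRing.Theory.

Section PolynomialCode.
Variable F : finFieldType.
Local Notation k := #|F|.

(* Listing 0 first makes the digit 0 the field zero, so that [code_poly c] has
   exactly the base-[k] digits of [c] as coefficients; the degree bound [c] of
   [\poly_] is harmless since [c < k ^ c]. *)
Definition field_digits : seq F := 0%R :: [seq x <- enum F | x != 0%R].
Definition fdigit (d : nat) : F := nth 0%R field_digits d.
Definition digit (c l : nat) : nat := c %/ k ^ l %% k.
Definition code_poly (c : nat) : {poly F} := \poly_(l < c) fdigit (digit c l).
Definition code (c i : nat) : nat := index ((code_poly c).[fdigit i])%R field_digits.

Lemma field_digits_uniq : uniq field_digits.
Proof. by rewrite /= mem_filter eqxx filter_uniq ?enum_uniq. Qed.

Lemma mem_field_digits x : x \in field_digits.
Proof. by rewrite inE mem_filter mem_enum andbT; case: eqP. Qed.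

Lemma size_field_digits : size field_digits = k.
Proof.
rewrite -(card_uniqP field_digits_uniq); apply: eq_card => x.
by rewrite mem_field_digits.
Qed.

Lemma fdigit_inj d d' : d < k -> d' < k -> fdigit d = fdigit d' -> d = d'.
Proof.
move=> dk d'k /eqP; rewrite nth_uniq ?size_field_digits //; last exact: field_digits_uniq.
by move/eqP.
Qed.

Lemma card_field_gt1 : 1 < k.
Proof. by apply/card_gt1P; exists 0%R, 1%R; rewrite eq_sym oner_neq0. Qed.

Lemma digit_lt c l : digit c l < k.
Proof. by rewrite ltn_mod (ltnW card_field_gt1). Qed.

Lemma code_lt c i : code c i < k.
Proof. by rewrite -size_field_digits index_mem mem_field_digits. Qed.

Lemma eq_code c c' i :
  (code c i == code c' i) = ((code_poly c).[fdigit i] == (code_poly c').[fdigit i])%R.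
Proof.
apply/eqP/eqP => [|eq_ev]; last by rewrite /code eq_ev.
exact: (index_inj 0%R (mem_field_digits _) (mem_field_digits _)).
Qed.

Lemma coef_code_poly c l : ((code_poly c)`_l)%R = fdigit (digit c l).
Proof.
rewrite coef_poly; case: ltnP => // cl.
rewrite /digit divn_small ?mod0n //.
by apply: leq_trans (ltn_expl c card_field_gt1) _; rewrite leq_exp2l ?card_field_gt1.
Qed.

Lemma digits_inj t c c' : c < k ^ t.+1 -> c' < k ^ t.+1 ->
  (forall l, l <= t -> digit c l = digit c' l) -> c = c'.
Proof.
elim: t c c' => [|t IHt] c c' ck c'k eq_dig.
  by move: (eq_dig 0 (leqnn 0)); rewrite /digit expn0 !divn1 !modn_small // -(expn1 k).
rewrite (divn_eq c k) (divn_eq c' k).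
have := eq_dig 0 isT; rewrite /digit expn0 !divn1 => ->.
have k_gt0 : 0 < k := ltnW card_field_gt1.
congr (_ * _ + _); apply: IHt.
- by rewrite ltn_divLR // -expnSr.
- by rewrite ltn_divLR // -expnSr.
by move=> l lt; move: (eq_dig l.+1 lt); rewrite /digit expnS -!divnMA.
Qed.

Lemma size_code_poly t c : c < k ^ t.+1 -> size (code_poly c) <= t.+1.
Proof.
move=> ck; apply/leq_sizeP => l tl; rewrite coef_code_poly /digit divn_small ?mod0n //.
by apply: leq_trans ck _; rewrite leq_exp2l ?card_field_gt1.
Qed.

(* The difference of the two code polynomials is nonzero of degree at most [t]. *)
Lemma count_code_agree t c c' : c < k ^ t.+1 -> c' < k ^ t.+1 -> c != c' ->
  count (fun i => code c i == code c' i) (iota 0 k) <= t.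
Proof.
move=> ck c'k neq_cc'.
set D := (code_poly c - code_poly c')%R.
have D_neq0 : D != 0%R.
  apply: contra neq_cc' => /eqP D0; apply/eqP; apply: (digits_inj ck c'k) => l _.
  apply: fdigit_inj; rewrite ?digit_lt // -!coef_code_poly.
  by apply/eqP; rewrite -subr_eq0 -coefB -/D D0 coef0.
set A := [seq i <- iota 0 k | code c i == code c' i].
have uniq_roots : uniq (map fdigit A).
  rewrite map_inj_in_uniq ?filter_uniq ?iota_uniq // => i j.
  rewrite !mem_filter !mem_iota /= => /andP[_ ik] /andP[_ jk]; exact: fdigit_inj.
have all_roots : all (root D) (map fdigit A).
  apply/allP => x /mapP[i]; rewrite mem_filter eq_code => /andP[/eqP eq_ev _] ->.
  by rewrite /root hornerD hornerN eq_ev subrr.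
rewrite -size_filter -ltnS -(size_map fdigit).
apply: leq_trans (max_poly_roots D_neq0 all_roots uniq_roots) _.
by apply: leq_trans (size_polyD _ _) _; rewrite size_polyN geq_max !size_code_poly.
Qed.

End PolynomialCode.

Lemma count_sum (T : Type) (a : pred T) (s : seq T) : count a s = \sum_(x <- s) a x.
Proof. by rewrite -sum1_count big_mkcond; apply: eq_bigr => x _; case: (a x). Qed.

Lemma radix_pair_inj k a b a' b' : b < k -> b' < k ->
  a * k + b = a' * k + b' -> a = a' /\ b = b'.
Proof.
move=> bk b'k eq_ab; have k_gt0 : 0 < k := leq_ltn_trans (leq0n b) bk.
have /(congr1 (divn^~ k)) := eq_ab; have /(congr1 (modn^~ k)) := eq_ab.
by rewrite !divnMDl // !modnMDl !divn_small // !modn_small // !addn0.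
Qed.

Section Recoloring.
Variable F : finFieldType.
Local Notation k := #|F|.
Local Notation code := (code F).

Definition agreements c (l : seq nat) i := count (fun c' => code c' i == code c i) l.

Lemma sum_agreements t c l : c < k ^ t.+1 -> {in l, forall c', c' < k ^ t.+1} ->
  \sum_(i <- iota 0 k) agreements c l i <= count_mem c l * k + size l * t.
Proof.
move=> ck lk.
have -> : count_mem c l * k + size l * t = \sum_(c' <- l) ((c' == c) * k + t).
  rewrite big_split -big_distrl /= count_sum.
  by rewrite big_const_seq count_predT iter_addn_0 [t * _]mulnC.
rewrite (eq_bigr _ (fun i _ => count_sum _ _)) exchange_big /=.
rewrite big_seq [X in _ <= X]big_seq; apply: leq_sum => c' c'l; rewrite -count_sum.
case: eqVneq => [->|neq]; last exact: count_code_agree (lk c' c'l) ck neq.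
by rewrite mul1n (leq_trans (count_size _ _)) // size_iota leq_addr.
Qed.

Lemma card_field_gt0 : 0 < k.
Proof. exact: ltnW (card_field_gt1 F). Qed.

Definition best_point c l : nat :=
  [arg min_(i < Ordinal card_field_gt0) agreements c [seq c' <- l | c' != c] i].

Lemma best_point_lt c l : best_point c l < k.
Proof. exact: ltn_ord. Qed.

(* Averaging: the [k] evaluation points share at most [size l * t] agreements. *)
Lemma best_point_agreements t c l : c < k ^ t.+1 -> {in l, forall c', c' < k ^ t.+1} ->
  agreements c [seq c' <- l | c' != c] (best_point c l) * k <= size l * t.
Proof.
move=> ck lk; set l' := [seq c' <- l | c' != c].
have min_le i : i < k -> agreements c l' (best_point c l) <= agreements c l' i.
  move=> ik; rewrite /best_point; case: arg_minnP => // j _ j_min.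
  exact: (j_min (Ordinal ik)).
apply: (@leq_trans (\sum_(i <- iota 0 k) agreements c l' i)).
  rewrite -[X in _ * X](size_iota 0 k) -sum1_size big_distrr /=.
  rewrite big_seq [X in _ <= X]big_seq; apply: leq_sum => i.
  by rewrite mem_iota muln1 => /min_le.
apply: leq_trans (sum_agreements ck _) _.
  by move=> c'; rewrite mem_filter => /andP[_ /lk].
have -> : count_mem c l' = 0.
  by rewrite count_filter (eq_count (a2 := pred0)) ?count_pred0 // => c' /=; rewrite andbN.
by rewrite mul0n add0n leq_mul2r size_filter count_size orbT.
Qed.

Definition reduce c l : nat := best_point c l * k + code c (best_point c l).

Lemma reduce_lt c l : reduce c l < k * k.
Proof.
rewrite /reduce; have := best_point_lt c l; have := code_lt F c (best_point c l).
set i := best_point c l; set a := code c i; nia.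
Qed.

Lemma reduce_eq_code c l c' l' : reduce c' l' = reduce c l ->
  code c' (best_point c l) = code c (best_point c l).
Proof. by case/radix_pair_inj; rewrite ?code_lt // => <-. Qed.

(* Two neighbours keep a common colour only if they had one, or if the new
   colour of [x] is a point where their codewords agree. *)
Lemma count_reduce_eq t (f : nat -> nat) (nb : nat -> seq nat) x :
  f x < k ^ t.+1 -> {in nb x, forall y, f y < k ^ t.+1} ->
  count (fun y => reduce (f y) (map f (nb y)) == reduce (f x) (map f (nb x))) (nb x)
    <= count (fun y => f y == f x) (nb x) + size (nb x) * t %/ k.
Proof.
move=> fx_lt nb_lt; set i := best_point (f x) (map f (nb x)).
pose old := fun y => f y == f x.
pose fresh := fun y => (f y != f x) && (code (f y) i == code (f x) i).
have sub : subpred (fun y => reduce (f y) (map f (nb y)) == reduce (f x) (map f (nb x)))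
                   (predU old fresh).
  by move=> y /eqP/reduce_eq_code; rewrite /= /old /fresh -/i => ->; rewrite eqxx andbT orbN.
apply: leq_trans (sub_count sub _) _.
rewrite -(leq_add2r (count (predI old fresh) (nb x))) count_predUI -addnA leq_add2l.
apply: leq_trans _ (leq_addr _ _); rewrite leq_divRL ?card_field_gt0 //.
have -> : count fresh (nb x) = agreements (f x) [seq c' <- map f (nb x) | c' != f x] i.
  by rewrite /agreements count_filter count_map; apply: eq_count => y; rewrite /= andbC.
rewrite -(size_map f); apply: best_point_agreements fx_lt _.
by move=> _ /mapP[y y_nb ->]; apply: nb_lt.
Qed.

Definition palette p c l :=
  [seq i * k + code c i + 1 | i <- iota 0 k & agreements c l i <= p].

Definition palette_point x := x.-1 %/ k.

Lemma mem_palette p c l x : x \in palette p c l ->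
  [/\ palette_point x < k, agreements c l (palette_point x) <= p
    & x = palette_point x * k + code c (palette_point x) + 1].
Proof.
case/mapP => i; rewrite mem_filter mem_iota => /andP[agr_i ik] ->.
suff -> : palette_point (i * k + code c i + 1) = i by [].
by rewrite /palette_point addn1 /= divnMDl ?card_field_gt0 // divn_small ?code_lt // addn0.
Qed.

Lemma palette_range p c l x : x \in palette p c l -> 0 < x <= k * k.
Proof.
case/mem_palette; move: (palette_point x) => i ik _ ->.
have := code_lt F c i; move: (code c i) => a ak.
rewrite addn1 ltn0Sn /=; apply: (@leq_trans (i.+1 * k)).
  by rewrite mulSn addnC ltn_add2r.
by rewrite leq_mul2r ik orbT.
Qed.

Lemma palette_uniq p c l : uniq (palette p c l).
Proof.
rewrite map_inj_in_uniq ?filter_uniq ?iota_uniq // => i j _ _ /eqP.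
by rewrite !addn1 eqSS => /eqP /radix_pair_inj []; rewrite ?code_lt.
Qed.

Lemma palette_code p p' c c' l l' x : x \in palette p c l -> x \in palette p' c' l' ->
  code c' (palette_point x) = code c (palette_point x).
Proof.
move=> /mem_palette[_ _ x_eq] /mem_palette[_ _].
by rewrite {1}x_eq => /addIn/addnI ->.
Qed.

Lemma palette_size_ge p t c l : c < k ^ t.+1 -> {in l, forall c', c' < k ^ t.+1} ->
  8 * count_mem c l <= p.+1 -> 2 * size l * t <= k * p.+1 ->
  3 * k <= 8 * size (palette p c l).
Proof.
move=> ck lk same_le size_le.
set bad := count (fun i => p < agreements c l i) (iota 0 k).
have bad_le : bad * p.+1 <= \sum_(i <- iota 0 k) agreements c l i.
  rewrite /bad count_sum big_distrl /=; apply: leq_sum => i _.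
  by case: ltnP => //= /[!mul1n].
have := leq_trans bad_le (sum_agreements ck lk).
have size_pal : size (palette p c l) + bad = k.
  rewrite size_map size_filter -[in RHS](size_iota 0 k).
  rewrite -(count_predC (fun i => agreements c l i <= p)).
  by congr (_ + _); apply: eq_count => i /=; rewrite ltnNge.
set same := count_mem c l in same_le *; nia.
Qed.

End Recoloring.

Lemma sq_le_exp2 u : 7 <= u -> u * u <= 2 ^ u.-1.
Proof.
case: u => // u; elim: u => // u IHu; rewrite ltnS leq_eqVlt => /predU1P[<- //|u_ge].
by move: (IHu u_ge); rewrite /= expnS; nia.
Qed.

Lemma lin_le_exp2 u : 10 <= u -> 24 + 16 * u <= 2 ^ u.-1.
Proof.
case: u => // u; elim: u => // u IHu; rewrite ltnS leq_eqVlt => /predU1P[<- //|u_ge].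
by move: (IHu u_ge); rewrite /= expnS; lia.
Qed.

Lemma trunc_log2_lt n : 0 < n -> trunc_log 2 n < n.
Proof. by move=> n_gt0; apply: leq_trans (ltn_expl _ (isT : 1 < 2)) (trunc_logP _ n_gt0). Qed.

Lemma logstar_aux_fuel f f' n : n <= f -> n <= f' -> logstar_aux f n = logstar_aux f' n.
Proof.
elim: f f' n => [|f IHf] f' n nf nf'.
  by move: nf nf'; rewrite leqn0 => /eqP-> _; case: f'.
case: f' nf' => [|f'] nf' /=; first by move: nf'; rewrite leqn0 => /eqP->.
case: ifP => // /negbT; rewrite -ltnNge => n_gt1; congr S.
have lt_n := trunc_log2_lt (ltnW n_gt1).
by apply: IHf; rewrite -ltnS; apply: leq_trans lt_n _.
Qed.

Lemma logstarE n : 1 < n -> logstar n = (logstar (trunc_log 2 n)).+1.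
Proof.
case: n => // n n_gt1; rewrite /logstar /= leqNgt n_gt1 /=; congr S.
by apply: logstar_aux_fuel => //; rewrite -ltnS trunc_log2_lt.
Qed.

Lemma logstar_le1 n : n <= 1 -> logstar n = 0.
Proof. by case: n => [|[]]. Qed.

Lemma leq_logstar m n : m <= n -> logstar m <= logstar n.
Proof.
elim/ltn_ind: n m => n IHn m le_mn.
have [m_le1|m_gt1] := leqP m 1; first by rewrite logstar_le1.
have n_gt1 := leq_trans m_gt1 le_mn.
rewrite (logstarE m_gt1) (logstarE n_gt1) ltnS; apply: IHn (leq_trunc_log _ le_mn).
exact: trunc_log2_lt (ltnW n_gt1).
Qed.

Lemma logstar_maxn m n : logstar (maxn m n) <= logstar m + logstar n.
Proof. by case: (leqP m n) => _; [exact: leq_addl | exact: leq_addr]. Qed.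

Definition shrink n := 6 * up_log 2 n + 6.

(* Locked so that the constant is never unfolded into a unary numeral. *)
Definition shrink_floor := locked (2 ^ 128).

Lemma shrink_floorE : shrink_floor = 2 ^ 128.
Proof. by rewrite /shrink_floor -lock. Qed.

Lemma exp2_10_le_shrink_floor : 2 ^ 10 <= shrink_floor.
Proof. by rewrite shrink_floorE leq_pexp2l. Qed.

Lemma leq_shrink m n : m <= n -> shrink m <= shrink n.
Proof. by move=> le_mn; rewrite leq_add2r leq_mul2l leq_up_log. Qed.

Lemma shrink_le_floor n : n <= shrink_floor -> shrink n <= shrink_floor.
Proof.
move=> n_le; have : up_log 2 n <= 128 by apply: up_log_min; rewrite // -shrink_floorE.
by move: exp2_10_le_shrink_floor; rewrite /shrink; lia.
Qed.

Lemma shrink2_le_trunc_log n : shrink_floor < n -> shrink (shrink n) <= trunc_log 2 n.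
Proof.
move=> n_gt; set l := trunc_log 2 n.
have l_ge : 128 <= l by apply: trunc_log_max; rewrite // -shrink_floorE ltnW.
have up_le : up_log 2 n <= l.+1 by apply: up_log_min; rewrite // ltnW // trunc_log_ltn.
have : shrink n <= 8 * l by rewrite /shrink; lia.
move/leq_shrink/leq_trans; apply.
have up8_le : up_log 2 (8 * l) <= 3 + up_log 2 l.
  by apply: up_log_min; rewrite // expnD leq_mul // up_logP.
rewrite /shrink; have [u_ge|] := leqP 10 (up_log 2 l); last lia.
have := lin_le_exp2 u_ge; have := up_log_gtn (isT : 1 < 2) (leq_trans (isT : 1 < 128) l_ge).
lia.
Qed.

Lemma iter_shrink_floor s s' n :
  iter s shrink n <= shrink_floor -> iter (s' + s) shrink n <= shrink_floor.
Proof. by move=> le_floor; rewrite iterD; elim: s' => //= s' IHs; apply: shrink_le_floor. Qed.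

Lemma leq_iter_shrink s m n : m <= n -> iter s shrink m <= iter s shrink n.
Proof. by elim: s => //= s IHs /IHs /leq_shrink. Qed.

(* Two applications of [shrink] do at least as well as one [trunc_log 2]. *)
Lemma iter_shrink_logstar n : iter (2 * logstar n) shrink n <= shrink_floor.
Proof.
elim/ltn_ind: n => n IHn; have [n_le|n_gt] := leqP n shrink_floor.
  by have := @iter_shrink_floor 0 (2 * logstar n) n; rewrite addn0; apply.
have n_gt1 : 1 < n by apply: leq_ltn_trans n_gt; rewrite shrink_floorE expn_gt0.
rewrite (logstarE n_gt1) mulnS addnC iterD.
apply: leq_trans (leq_iter_shrink _ (shrink2_le_trunc_log n_gt)) _.
exact/IHn/trunc_log2_lt/ltnW.
Qed.

Definition gf2 (e : nat) : finFieldType :=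
  s2val (pPrimePowerField (isT : prime 2) (ltn0Sn e)).

Lemma card_gf2 e : #|gf2 e| = 2 ^ e.+1.
Proof. by rewrite /gf2; case: pPrimePowerField. Qed.

Lemma exp2_le_pow_ceil L e : 2 ^ L <= (2 ^ e.+1) ^ (L.-1 %/ e.+1).+1.
Proof.
rewrite -expnM leq_exp2l //; case: L => // L /=.
by rewrite mulnC ltn_ceil.
Qed.

Lemma exp2_up_log_le n : 0 < n -> 2 ^ up_log 2 n <= 2 * n.
Proof.
move=> n_gt0; have [n_le1|n_gt1] := leqP n 1.
  have /eqP-> : up_log 2 n == 0 by rewrite up_log_eq0 n_le1 orbT.
  by rewrite expn0 muln_gt0 n_gt0.
have := up_log_gtn (isT : 1 < 2) n_gt1; have := up_log_gt0 2 n; rewrite n_gt1 /=.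
by case: (up_log 2 n) => //= u _; rewrite expnS; lia.
Qed.

Section Schedule.
Variables Delta p : nat.

(* While colours have [L] bits, a round reads them as polynomials of degree
   [code_degree L] over [gf2 (field_exp L)]; [2 ^ ratio_log] approximates
   [Delta / (p + 1)]. *)
Definition ratio_log := up_log 2 (Delta %/ p.+1).+1.
Definition stop_bits := 8 * ratio_log + shrink_floor.
Definition field_exp L := ratio_log + 2 + 2 * up_log 2 L.
Definition code_degree L := L.-1 %/ (field_exp L).+1.
Definition defect_step L := Delta * code_degree L %/ 2 ^ (field_exp L).+1.
Definition next_bits L := if stop_bits < L then 2 * (field_exp L).+1 else L.
Definition bits L0 s := iter s next_bits L0.
Fixpoint defect L0 s :=
  if s is s'.+1 then
    defect L0 s' + (if stop_bits < bits L0 s' then defect_step (bits L0 s') else 0)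
  else 0.

Lemma ltn_ratio_log : Delta < 2 ^ ratio_log * p.+1.
Proof. by apply: leq_trans (ltn_ceil Delta (ltn0Sn p)) _; rewrite leq_mul2r up_logP. Qed.

Lemma field_exp_large L : 8 * Delta * (L * L) <= 2 ^ (field_exp L).+1 * p.+1.
Proof.
have -> : 2 ^ (field_exp L).+1 = 2 ^ ratio_log * 8 * (2 ^ up_log 2 L * 2 ^ up_log 2 L).
  have -> : 8 = 2 ^ 3 by [].
  by rewrite -!expnD; congr (2 ^ _); rewrite /field_exp; lia.
have := ltnW ltn_ratio_log; have : L <= 2 ^ up_log 2 L by exact: up_logP.
move: (2 ^ ratio_log) (2 ^ up_log 2 L) => r u L_le Delta_le.
apply: (@leq_trans (8 * (r * p.+1) * (u * u))); last by lia.
by rewrite !leq_mul.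
Qed.

Lemma defect_step_le L : 8 * L * defect_step L <= p.+1.
Proof.
set K := 2 ^ (field_exp L).+1; have K_gt0 : 0 < K by rewrite expn_gt0.
have step_le : defect_step L * K <= Delta * L.
  apply: leq_trans (leq_divM _ _) _; rewrite leq_mul2l; apply/orP; right.
  exact: leq_trans (leq_div _ _) (leq_pred _).
rewrite -(leq_pmul2r K_gt0); have := field_exp_large L.
by have := leq_mul (leqnn (8 * L)) step_le; rewrite -/K; lia.
Qed.

Lemma field_exp_small L : stop_bits < L -> 2 * (2 * (field_exp L).+1) <= L.
Proof.
rewrite /stop_bits /field_exp => L_gt.
have floor_lt : shrink_floor < L by apply: leq_ltn_trans (leq_addl _ _) L_gt.
have up_gt : 128 < up_log 2 L.
  rewrite -(ltn_exp2l _ _ (isT : 1 < 2)) -shrink_floorE.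
  exact: leq_trans floor_lt (up_logP _ _).
have := lin_le_exp2 (ltnW (leq_trans (isT : 10 < 129) up_gt)).
have := exp2_10_le_shrink_floor; have := up_log_gtn (isT : 1 < 2) (_ : 1 < L).
lia.
Qed.

(* The defect accumulated so far stays below [(p + 1) / 8L]: each round adds at
   most [(p + 1) / 8L] while at least halving [L]. *)
Lemma bits_defect_inv L0 s :
  (defect L0 s = 0 \/ 0 < bits L0 s) /\ 8 * bits L0 s * defect L0 s <= p.+1.
Proof.
elim: s => [|s [IH0 IH]] /=; first by rewrite muln0; split; [left|].
rewrite /next_bits -/(bits L0 s); case: ifP => active; last by rewrite addn0.
split; first by right.
have := field_exp_small active; have := defect_step_le (bits L0 s).
move: (bits L0 s) (defect L0 s) (defect_step _) IH0 IH => L D i; nia.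
Qed.

Lemma defect_le L0 s : 8 * defect L0 s <= p.+1.
Proof.
have [[->|bits_gt0] inv] := bits_defect_inv L0 s; first by [].
by apply: leq_trans inv; rewrite leq_mul2r leq_pmulr ?orbT.
Qed.

Lemma bits_le_iter_shrink L0 s : bits L0 s <= maxn stop_bits (iter s shrink L0).
Proof.
elim: s => [|s IHs]; first exact: leq_maxr.
rewrite /bits /= /next_bits -/(bits L0 s).
case: ifP => active; last by rewrite leq_max leqNgt active.
have shrink_floor_ge : 6 <= shrink_floor by apply: leq_trans exp2_10_le_shrink_floor.
rewrite leq_max /field_exp /stop_bits in IHs *.
have [ratio_le|] := leqP ratio_log (up_log 2 (bits L0 s)); last by lia.
have /leq_shrink : bits L0 s <= iter s shrink L0.
  by case/orP: IHs => // bits_le; rewrite leqNgt active in bits_le.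
by rewrite /shrink; lia.
Qed.

Lemma bits_final L0 R : 2 * logstar L0 <= R -> bits L0 R <= stop_bits.
Proof.
move=> R_ge; apply: leq_trans (bits_le_iter_shrink L0 R) _; rewrite geq_max leqnn /=.
rewrite -(subnK R_ge); apply: leq_trans (iter_shrink_floor _ (iter_shrink_logstar L0)) _.
exact: leq_addl.
Qed.

Definition final_degree_bound := 8 + shrink_floor.
Definition final_exp := ratio_log + up_log 2 final_degree_bound.

Lemma final_degree_le L : L <= stop_bits -> L.-1 %/ final_exp.+1 <= final_degree_bound.
Proof.
rewrite /stop_bits => L_le; rewrite -ltnS ltn_divLR // /final_degree_bound /final_exp.
nia.
Qed.

Lemma exp2_final_exp : 2 ^ final_exp.+1 = 2 * 2 ^ ratio_log * 2 ^ up_log 2 final_degree_bound.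
Proof. by rewrite expnS expnD mulnA. Qed.

Lemma final_size_ge : 2 * Delta * final_degree_bound <= 2 ^ final_exp.+1 * p.+1.
Proof.
rewrite exp2_final_exp; have := ltnW ltn_ratio_log.
have : final_degree_bound <= 2 ^ up_log 2 final_degree_bound by exact: up_logP.
move: (2 ^ ratio_log) (2 ^ up_log _ _) => r u; nia.
Qed.

Lemma final_size_le : 0 < p -> p <= Delta ->
  2 ^ final_exp.+1 * p <= 16 * final_degree_bound * Delta.
Proof.
move=> p_gt0 p_le; rewrite exp2_final_exp.
have := @exp2_up_log_le final_degree_bound isT.
have := exp2_up_log_le (ltn0Sn (Delta %/ p.+1)); rewrite -/ratio_log.
have : Delta %/ p.+1 * p.+1 <= Delta by exact: leq_divM.
move: (Delta %/ p.+1) (2 ^ ratio_log) (2 ^ up_log _ _) => q r u qp_le r_le u_le.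
apply: (@leq_trans (2 * (2 * q.+1) * (2 * final_degree_bound) * p)); last by nia.
by rewrite leq_mul2r leq_mul ?leq_mul2l ?r_le ?orbT.
Qed.

(* The algorithm runs on IDs: [E] is the graph transported along the IDs, or
   the part of it that a vertex sees. *)
Section IdGraph.
Variables (M L0 : nat) (E : rel nat).

Definition nbrs x := [seq y <- iota 0 M | E x y].

Fixpoint color s x :=
  if s is s'.+1 then
    let L := bits L0 s' in
    if stop_bits < L then reduce (gf2 (field_exp L)) (color s' x) (map (color s') (nbrs x))
    else color s' x
  else x.

Definition final_palette R x :=
  palette (gf2 final_exp) p (color R x) (map (color R) (nbrs x)).

Lemma colorS s x : color s.+1 x =
  if stop_bits < bits L0 s
  then reduce (gf2 (field_exp (bits L0 s))) (color s x) (map (color s) (nbrs x))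
  else color s x.
Proof. by []. Qed.

Lemma nbrs_lt x y : y \in nbrs x -> y < M.
Proof. by rewrite mem_filter mem_iota => /andP[]. Qed.

Hypothesis M_le : M <= 2 ^ L0.
Hypothesis E_irr : irreflexive E.
Hypothesis size_nbrs_le : forall x, size (nbrs x) <= Delta.

Lemma color_lt s x : x < M -> color s x < 2 ^ bits L0 s.
Proof.
elim: s x => [|s IHs] x x_lt /=; first exact: leq_trans x_lt M_le.
rewrite /next_bits; case: ifP => _; last exact: IHs.
by rewrite mulnC expnM expnS expn1 -card_gf2 reduce_lt.
Qed.

Lemma color_code_lt s x : x < M ->
  color s x < #|gf2 (field_exp (bits L0 s))| ^ (code_degree (bits L0 s)).+1.
Proof.
by move=> x_lt; rewrite card_gf2; apply: leq_trans (color_lt s x_lt) (exp2_le_pow_ceil _ _).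
Qed.

Lemma color_defect s x : x < M ->
  count (fun y => color s y == color s x) (nbrs x) <= defect L0 s.
Proof.
elim: s x => [|s IHs] x x_lt /=.
  rewrite (eq_in_count (a2 := pred0)) ?count_pred0 // => y.
  by rewrite mem_filter => /andP[xy _]; apply: contraTF xy => /eqP->; rewrite E_irr.
case: ifP => active /=; last by rewrite addn0; apply: IHs.
apply: leq_trans (count_reduce_eq (color_code_lt s x_lt) _) _.
  by move=> y /nbrs_lt; apply: color_code_lt.
by rewrite card_gf2 leq_add ?IHs // leq_div2r // leq_mul2r size_nbrs_le orbT.
Qed.

Lemma final_palette_size R x : 0 < p -> 2 * logstar L0 <= R -> x < M ->
  Delta <= 4 * (size (final_palette R x) * p).
Proof.
move=> p_gt0 R_ge x_lt; set t := (bits L0 R).-1 %/ final_exp.+1.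
have t_le : t <= final_degree_bound by apply/final_degree_le/bits_final.
have col_lt y : y < M -> color R y < #|gf2 final_exp| ^ t.+1.
  by move=> y_lt; rewrite card_gf2; apply: leq_trans (color_lt R y_lt) (exp2_le_pow_ceil _ _).
have same_le : 8 * count_mem (color R x) (map (color R) (nbrs x)) <= p.+1.
  by rewrite count_map; apply: leq_trans (defect_le L0 R); rewrite leq_mul2l color_defect ?orbT.
have size_le : 2 * size (map (color R) (nbrs x)) * t <= #|gf2 final_exp| * p.+1.
  rewrite size_map card_gf2; apply: leq_trans final_size_ge.
  by rewrite leq_mul // leq_mul2l size_nbrs_le orbT.
have nbr_lt : {in map (color R) (nbrs x), forall c, c < #|gf2 final_exp| ^ t.+1}.
  by move=> _ /mapP[y /nbrs_lt /col_lt y_lt ->].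
have := palette_size_ge (col_lt x x_lt) nbr_lt same_le size_le.
rewrite -/(final_palette R x) card_gf2.
have := final_size_ge; have : 1 <= final_degree_bound by [].
move: (2 ^ _) (size _) => K n; nia.
Qed.

End IdGraph.
End Schedule.

Section Locality.
Variables (T : finType) (e : rel T) (id : T -> nat).
Hypothesis id_inj : injective id.

Definition id_graph (a b : nat) : bool :=
  [exists x, exists y, [&& e x y, id x == a & id y == b]].

Lemma id_graph_id v b : id_graph (id v) b = [exists u, e v u && (id u == b)].
Proof.
apply/existsP/existsP => [[x /existsP[u /and3P[xu /eqP/id_inj xv ub]]]|[u /andP[vu ub]]].
  by exists u; rewrite -xv xu.
by exists v; apply/existsP; exists u; rewrite vu eqxx.
Qed.

Lemma id_graphE v u : id_graph (id v) (id u) = e v u.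
Proof.
rewrite id_graph_id; apply/existsP/idP => [[w /andP[vw /eqP/id_inj <-]] //|vu].
by exists u; rewrite vu eqxx.
Qed.

Lemma id_graphP a b : id_graph a b -> exists v u, [/\ a = id v, b = id u & e v u].
Proof. by case/existsP => v /existsP[u /and3P[vu /eqP<- /eqP<-]]; exists v, u. Qed.

Lemma id_graph_irr : irreflexive e -> irreflexive id_graph.
Proof.
move=> e_irr a; apply/negbTE/negP => /id_graphP[v [u [-> /id_inj vu]]].
by rewrite vu e_irr.
Qed.

Lemma view_graph_id r v w b : w \in inner e r v ->
  (view e id r v).2 (id w) b = id_graph (id w) b.
Proof.
move=> w_in; rewrite id_graph_id.
apply/existsP/existsP => [[x /existsP[u /and4P[_ xu /eqP/id_inj xw ub]]]|[u /andP[wu ub]]].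
  by exists u; rewrite -xw xu.
by exists w; apply/existsP; exists u; rewrite w_in wu eqxx.
Qed.

Lemma ball_center r v : v \in ball e r v.
Proof. by elim: r => [|r IHr] /=; rewrite !inE ?IHr. Qed.

Lemma subset_ball r1 r2 v : r1 <= r2 -> ball e r1 v \subset ball e r2 v.
Proof.
elim: r2 => [|r2 IHr]; first by rewrite leqn0 => /eqP->.
rewrite leq_eqVlt => /predU1P[-> //|/IHr sub].
by apply: subset_trans sub _; apply/subsetP => x x_in /=; rewrite inE x_in.
Qed.

Lemma ball_edge r v w u : w \in ball e r v -> e w u -> u \in ball e r.+1 v.
Proof.
by move=> w_in wu /=; rewrite !inE; apply/orP; right; apply/existsP; exists w; rewrite w_in.
Qed.

Section Colors.
Variables (Delta p M L0 : nat).

(* The colour after [s] rounds depends only on the [s]-ball, and the [r]-round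
   view determines the graph on the [r]-ball: the LOCAL simulation argument. *)
Lemma color_view r v s w : s <= r -> w \in ball e (r - s) v ->
  color Delta p M L0 (view e id r v).2 s (id w) = color Delta p M L0 id_graph s (id w).
Proof.
elim: s w => [//|s IHs] w s_lt w_in; rewrite !colorS.
have w_in' : w \in ball e (r - s) v.
  by apply: (subsetP (subset_ball v (_ : r - s.+1 <= r - s))) w_in; lia.
have w_inner : w \in inner e r v.
  case: r s_lt w_in {w_in' IHs} => // r s_lt w_in /=.
  by apply: (subsetP (subset_ball v (_ : r.+1 - s.+1 <= r))) w_in; lia.
have nbrs_eq : nbrs M (view e id r v).2 (id w) = nbrs M id_graph (id w).
  by apply: eq_filter => b; exact: view_graph_id.
rewrite (IHs w (ltnW s_lt) w_in') nbrs_eq.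
suff /eq_in_map-> : {in nbrs M id_graph (id w),
  color Delta p M L0 (view e id r v).2 s =1 color Delta p M L0 id_graph s} by [].
move=> b; rewrite mem_filter => /andP[/id_graphP[v' [u [/id_inj <- -> wu]]] _].
apply: IHs; first exact: ltnW.
by rewrite (_ : r - s = (r - s.+1).+1) ?(ball_edge w_in wu) //; lia.
Qed.

Lemma final_palette_view r v :
  final_palette Delta p M L0 (view e id r.+1 v).2 r (id v) =
  final_palette Delta p M L0 id_graph r (id v).
Proof.
have col_eq w : w \in ball e 1 v ->
    color Delta p M L0 (view e id r.+1 v).2 r (id w) = color Delta p M L0 id_graph r (id w).
  by move=> w_in; apply: color_view; rewrite ?subSnn.
have nbrs_eq : nbrs M (view e id r.+1 v).2 (id v) = nbrs M id_graph (id v).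
  by apply: eq_filter => b; apply: view_graph_id; apply: ball_center.
rewrite /final_palette nbrs_eq (col_eq v (ball_center 1 v)).
suff /eq_in_map-> : {in nbrs M id_graph (id v),
  color Delta p M L0 (view e id r.+1 v).2 r =1 color Delta p M L0 id_graph r} by [].
move=> b; rewrite mem_filter => /andP[/id_graphP[v' [u [/id_inj <- -> vu]]] _].
exact/col_eq/(ball_edge (ball_center 0 v)).
Qed.

Hypothesis id_lt : forall v, id v < M.

Lemma card_nbrs v (Q : pred nat) :
  #|[set u | e v u & Q (id u)]| = count Q (nbrs M id_graph (id v)).
Proof.
rewrite -size_filter cardE -(size_map id); apply: perm_size; apply: uniq_perm.
- by rewrite map_inj_uniq ?enum_uniq.
- by rewrite !filter_uniq ?iota_uniq.
move=> b; apply/mapP/idP => [[u]|].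
  rewrite mem_enum inE => /andP[vu Qu] ->.
  by rewrite !mem_filter Qu id_graphE vu mem_iota id_lt.
rewrite !mem_filter => /and3P[Qb /id_graphP[v' [u [/id_inj <- b_eq vu]]] _].
by exists u; rewrite // mem_enum inE vu -b_eq.
Qed.

Lemma size_nbrs_id_graph x : size (nbrs M id_graph x) <= maxdeg e.
Proof.
have [v /eqP <-|no_v] := pickP (fun v => id v == x).
  rewrite -count_predT -card_nbrs; apply: leq_trans (leq_bigmax v).
  by apply: subset_leq_card; apply/subsetP => u; rewrite !inE => /andP[].
rewrite /nbrs (eq_in_filter (a2 := pred0)) ?filter_pred0 // => b _.
by apply/negbTE/negP => /id_graphP[v [u [xv _ _]]]; move: (no_v v); rewrite -xv eqxx.
Qed.

Lemma final_palette_defective R (phi : T -> nat) :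
  (forall v, phi v \in final_palette Delta p M L0 id_graph R (id v)) -> defective e p phi.
Proof.
move=> phi_in v; have := phi_in v; case/mem_palette => _ agree_le _.
apply: leq_trans agree_le; rewrite /agreements count_map -card_nbrs.
apply: subset_leq_card; apply/subsetP => u; rewrite !inE => /andP[-> /eqP phi_uv] /=.
by move: (phi_in u); rewrite phi_uv => /(palette_code (phi_in v)) ->.
Qed.

End Colors.
End Locality.

Lemma exp_le_exp2_up_log a n : n ^ a <= 2 ^ (a * up_log 2 n).
Proof. by rewrite mulnC expnM; case: a => [|a]; rewrite ?expn0 // leq_exp2r // up_logP. Qed.

Lemma up_log_bits_le a n : a * up_log 2 n <= maxn n (a * (a + 7)).
Proof.
rewrite leq_max; have [n_lt|n_ge] := ltnP n (2 ^ (a + 7)).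
  by apply/orP; right; rewrite leq_mul2l (up_log_min _ (ltnW n_lt)) ?orbT.
have u_ge : a + 7 <= up_log 2 n.
  by rewrite -(leq_exp2l _ _ (isT : 1 < 2)); apply: leq_trans n_ge (up_logP _ _).
have n_gt1 : 1 < n.
  by apply: leq_trans n_ge; apply: leq_trans (ltn_expl _ (isT : 1 < 2)); lia.
apply/orP; left; apply: leq_trans (ltnW (up_log_gtn (isT : 1 < 2) n_gt1)).
apply: leq_trans (sq_le_exp2 (leq_trans (leq_addl a 7) u_ge)); rewrite leq_mul2r.
by apply/orP; right; apply: leq_trans u_ge; rewrite leq_addr.
Qed.

Definition palette_rounds_factor a := 2 + 2 * logstar (a * (a + 7)).
Definition palette_rounds a n := palette_rounds_factor a * (logstar n).+1.

Lemma logstar_bits_le a n : 2 * logstar (a * up_log 2 n) <= palette_rounds a n.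
Proof.
have := leq_trans (leq_logstar (up_log_bits_le a n)) (logstar_maxn _ _).
rewrite /palette_rounds /palette_rounds_factor; nia.
Qed.

(* IDs below [n ^ a] are the initial colours, of [a * up_log 2 n] bits; the
   vertex ID is the first component of the view. *)
Definition palette_algo (a : nat) : local_algo := fun n Delta p vw =>
  final_palette Delta p (n ^ a) (a * up_log 2 n) vw.2 (palette_rounds a n) vw.1.

Theorem theorem5 :
  exists C d : nat, 0 < C /\ 0 < d /\
  forall a : nat,
  exists (rounds : nat -> nat -> nat -> nat) (A : local_algo) (K : nat),
    (forall n Delta p, rounds n Delta p <= K * (logstar n).+1) /\
    forall (T : finType) (e : rel T) (id : T -> nat) (p : nat),
      simple_graph e ->
      injective id ->
      (forall v, id v < #|T| ^ a) ->
      1 <= p <= maxdeg e ->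
      let n := #|T| in
      let Delta := maxdeg e in
      let S := fun v => A n Delta p (view e id (rounds n Delta p) v) in
      exists m : nat,
        m * p ^ 2 <= C * Delta ^ 2 /\
        (forall v, forall x, x \in S v -> 1 <= x <= m) /\
        (forall v, Delta <= d * (size (undup (S v)) * p)) /\
        (forall phi : T -> nat, (forall v, phi v \in S v) -> defective e p phi).
Proof.
exists (256 * final_degree_bound * final_degree_bound), 4; split=> //; split=> // a.
exists (fun n _ _ => (palette_rounds a n).+1), (palette_algo a), (palette_rounds_factor a).+1.
split=> [n _ _|T e id p [_ e_irr] id_inj id_lt /andP[p_gt0 p_le] n Delta S].
  by rewrite /palette_rounds mulSn; lia.
set M := n ^ a; set L0 := a * up_log 2 n; set R := palette_rounds a n.
have S_eq v : S v = final_palette Delta p M L0 (id_graph e id) R (id v).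
  exact: final_palette_view.
set K := 2 ^ (final_exp Delta p).+1.
exists (K * K); split; [|split; [|split]].
- by have := final_size_le p_gt0 p_le; rewrite -/K -/Delta; nia.
- by move=> v x; rewrite S_eq => /palette_range; rewrite card_gf2.
- move=> v; rewrite S_eq undup_id ?palette_uniq //.
  apply: final_palette_size => //; last exact: logstar_bits_le.
  + exact: exp_le_exp2_up_log.
  + exact: id_graph_irr.
  + by move=> x; apply: size_nbrs_id_graph.
- move=> phi phi_in; apply: (@final_palette_defective _ _ _ id_inj Delta p M L0 id_lt R).
  by move=> v; rewrite -S_eq.
Qed.
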